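(* Let $\sigma = 2$. For every Parikh vector $P \in \mathbb{N}_0^{2}$ and every word $w \in \Sigma^{*|_P}$, there exists a Hamiltonian path in the configuration graph $G(P)$ starting at $w$.
   Context: Alphabet $\Sigma = \{1,2\}$. For $P \in \mathbb{N}_0^2$, $n := P[1]+P[2]$ and $\Sigma^{*|_P}$ is the set of words of length $n$ with exactly $P[1]$ occurrences of $1$ and $P[2]$ occurrences of $2$. For a word $w$ and $i\neq j$ with $w[i]\neq w[j]$, the 2-swap $w\circ(i,j)$ exchanges the symbols at positions $i$ and $j$. The configuration graph $G(P)$ has vertex set $\Sigma^{*|_P}$ and an edge $\{w,u\}$ whenever $u = w\circ(i,j)$ for some 2-swap. A Hamiltonian path starting at $w$ is a path beginning at $w$ that visits every vertex exactly once. *)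

From mathcomp Require Import all_boot.
Set Implicit Arguments. Unset Strict Implicit. Unset Printing Implicit Defensive.

(* Alphabet Sigma = {1,2}; words are sequences of naturals over {1,2}.
   A Parikh vector P in N_0^2 is a pair (P[1], P[2]). *)

(* w belongs to Sigma^{*|_P}: length P[1]+P[2], exactly P[1] ones and P[2] twos
   (this forces every letter to be 1 or 2). *)
Definition in_words (P : nat * nat) (w : seq nat) : Prop :=
  size w = P.1 + P.2 /\ count_mem 1 w = P.1 /\ count_mem 2 w = P.2.

Definition swap2 (w : seq nat) (i j : nat) : seq nat :=
  set_nth 0 (set_nth 0 w i (nth 0 w j)) j (nth 0 w i).

Definition swap_adj (w u : seq nat) : Prop :=
  exists i j, i < size w /\ j < size w /\ i <> j /\
              nth 0 w i <> nth 0 w j /\ u = swap2 w i j.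

Definition G_edge (P : nat * nat) (w u : seq nat) : Prop :=
  in_words P w /\ in_words P u /\ swap_adj w u.

Definition hamiltonian_path_from (P : nat * nat) (w : seq nat) (p : seq (seq nat)) : Prop :=
  p <> [::] /\ head [::] p = w /\ uniq p /\
  (forall u, u \in p -> in_words P u) /\
  (forall u, in_words P u -> u \in p) /\
  (forall k, k.+1 < size p -> G_edge P (nth [::] p k) (nth [::] p k.+1)).

From mathcomp Require Import all_boot.
From mathcomp Require Import zify.
Set Implicit Arguments. Unset Strict Implicit. Unset Printing Implicit Defensive.

(* If one letter is absent,
   G(P) has a single vertex.  Otherwise the vertices split according to their
   first letter: the words c::u with u of Parikh vector P - c, and the words
   d::u with u of Parikh vector P - d, where {c, d} = {1, 2} and c is the first
   letter of w.  By induction the tail of w starts a Hamiltonian path of the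
   first block; its last vertex x contains the letter d, say x = x1 ++ d :: x2,
   and swapping the first letter of c :: x with that d jumps to the vertex
   d :: x1 ++ c :: x2 of the second block, from which a second inductive path
   covers that block. *)

Section HamiltonianPaths.

Variables (T : eqType) (e : T -> T -> Prop).

Fixpoint epath (x : T) (q : seq T) : Prop :=
  if q is y :: q' then e x y /\ epath y q' else True.

Lemma epath_cat x q1 q2 :
  epath x (q1 ++ q2) <-> epath x q1 /\ epath (last x q1) q2.
Proof.
elim: q1 x => [|y q1 IHq] x /=; first by split=> [|[]].
by rewrite IHq; split=> [[? []]|[[? ?] ?]].
Qed.

Lemma epath_nth x0 x q k :
  epath x q -> k < size q -> e (nth x0 (x :: q) k) (nth x0 (x :: q) k.+1).
Proof.
elim: q x k => [|y q IHq] x [|k] //= [exy pq] ltk; first exact: exy.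
exact: IHq.
Qed.

Lemma epath_map (f : T -> T) x q :
  (forall u v, e u v -> e (f u) (f v)) -> epath x q -> epath (f x) (map f q).
Proof.
move=> fe; elim: q x => [|y q IHq] x //= [exy pq].
by split; [apply: fe | apply: IHq].
Qed.

Definition ham_path (V : T -> Prop) (w : T) (q : seq T) : Prop :=
  [/\ uniq (w :: q), forall u, V u <-> u \in w :: q & epath w q].

Lemma ham_path_last V w q : ham_path V w q -> V (last w q).
Proof. by case=> _ memV _; apply/memV; apply: mem_last. Qed.

Lemma ham_path_single V w : (forall u, V u <-> u = w) -> ham_path V w [::].
Proof. by move=> Vw; split=> // u; rewrite Vw inE; split=> /eqP. Qed.

Lemma ham_path_ext V V' w q :
  (forall u, V u <-> V' u) -> ham_path V w q -> ham_path V' w q.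
Proof. by move=> VV' [uq memV pq]; split=> // u; rewrite -VV'. Qed.

Definition image_set (f : T -> T) (V : T -> Prop) (u : T) : Prop :=
  exists u', u = f u' /\ V u'.

Lemma ham_path_map (f : T -> T) V w q :
  injective f -> (forall u v, e u v -> e (f u) (f v)) ->
  ham_path V w q -> ham_path (image_set f V) (f w) (map f q).
Proof.
move=> inj_f fe [uq memV pq]; split; last exact: epath_map.
  by rewrite -map_cons map_inj_uniq.
move=> u; rewrite -map_cons; split.
  by case=> u' [-> /memV Vu']; apply: map_f.
by case/mapP=> u' /memV Vu' ->; exists u'.
Qed.

Lemma ham_path_cat V1 V2 w1 q1 w2 q2 :
  ham_path V1 w1 q1 -> ham_path V2 w2 q2 ->
  (forall u, V1 u -> V2 u -> False) -> e (last w1 q1) w2 ->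
  ham_path (fun u => V1 u \/ V2 u) w1 (q1 ++ w2 :: q2).
Proof.
move=> [uq1 mem1 pq1] [uq2 mem2 pq2] disj12 join.
split; last by apply/epath_cat.
- rewrite -cat_cons cat_uniq uq1 uq2 andbT.
  by apply/hasPn=> u /mem2 V2u; apply/negP=> /mem1 V1u; apply: (disj12 u).
- by move=> u; rewrite -cat_cons mem_cat mem1 mem2; split=> /orP.
Qed.

End HamiltonianPaths.

Lemma swap_adj_cons c u v : swap_adj u v -> swap_adj (c :: u) (c :: v).
Proof.
case=> i [j [ltiw [ltjw [neij [neq ->]]]]].
by exists i.+1, j.+1; do !split=> //; case.
Qed.

Lemma ham_path_cons c V w q :
  ham_path swap_adj V w q ->
  ham_path swap_adj (image_set (cons c) V) (c :: w) (map (cons c) q).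
Proof. by apply: ham_path_map; [move=> u v [] | apply: swap_adj_cons]. Qed.

Lemma swap_adj_front c d x1 x2 :
  c <> d -> swap_adj (c :: x1 ++ d :: x2) (d :: x1 ++ c :: x2).
Proof.
have nth_mid (s : seq nat) y : nth 0 (s ++ y :: x2) (size s) = y by elim: s.
have set_mid (s : seq nat) y z : set_nth 0 (s ++ y :: x2) (size s) z = s ++ z :: x2.
  by elim: s => //= x s ->.
move=> necd; exists 0, (size x1).+1; rewrite /= size_cat /= nth_mid.
split=> //; split; first lia.
do 2!split=> //.
by rewrite /swap2 /= nth_mid set_mid.
Qed.

Lemma in_words_perm P u v : perm_eq u v -> in_words P u -> in_words P v.
Proof.
move=> puv [su [c1 c2]]; rewrite /in_words -(perm_size puv).
by rewrite -!(permP puv).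
Qed.

Lemma in_words_unique a b u v :
  (a = 0 \/ b = 0) -> in_words (a, b) u -> in_words (a, b) v -> u = v.
Proof.
have const (x n : nat) s : size s = n -> count_mem x s = n -> s = nseq n x.
  by move=> <- cs; apply/all_pred1P; rewrite all_count cs.
case=> -> [/= su [c1u c2u]] [/= sv [c1v c2v]].
  by rewrite (const 2 b u) // (const 2 b v).
by rewrite addn0 in su sv; rewrite (const 1 a u) // (const 1 a v).
Qed.

Lemma ham_path_constant a b w : (a = 0 \/ b = 0) -> in_words (a, b) w ->
  ham_path swap_adj (in_words (a, b)) w [::].
Proof.
move=> ab0 Ww; apply: ham_path_single => u.
by split=> [Wu|->//]; apply: in_words_unique Wu Ww.
Qed.

Lemma in_words_first a b u : 0 < a -> 0 < b ->
  in_words (a, b) u <->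
  image_set (cons 1) (in_words (a.-1, b)) u \/
  image_set (cons 2) (in_words (a, b.-1)) u.
Proof.
have letters s : count_mem 1 s + count_mem 2 s <= size s.
  by elim: s => //= x s; case: eqP; case: eqP; lia.
move=> a_gt0 b_gt0; split.
  case: u => [|c u] [/= su [c1 c2]]; first lia.
  have := letters u; move: c1 c2.
  case: (eqVneq c 1) => [-> /= c1 c2 _|ne1].
    by left; exists u; split=> //; rewrite /in_words /=; lia.
  case: (eqVneq c 2) => [-> /= c1 c2 _|ne2].
    by right; exists u; split=> //; rewrite /in_words /=; lia.
  by move=> /= c1 c2; lia.
by case=> -[u' [-> [/= su [c1 c2]]]]; rewrite /in_words /=; lia.
Qed.

(* The induction step, stated symmetrically in the two letters: if V splits
   into the blocks c::Vc and d::Vd, is closed under permutation and all its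
   words contain d, then a Hamiltonian path of Vc from w, prefixed by c and
   followed by a front swap into the block d::Vd, extends to a Hamiltonian
   path of V from c::w, provided every word of Vd starts such a path. *)
Lemma ham_path_extend (V Vc Vd : seq nat -> Prop) c d w q1 :
  c <> d ->
  (forall u, V u <-> image_set (cons c) Vc u \/ image_set (cons d) Vd u) ->
  (forall u v, perm_eq u v -> V u -> V v) ->
  (forall u, V u -> d \in u) ->
  (forall y, Vd y -> exists q, ham_path swap_adj Vd y q) ->
  ham_path swap_adj Vc w q1 ->
  exists q, ham_path swap_adj V (c :: w) q.
Proof.
move=> necd splitV permV hasd hamVd hamc.
set x := last w q1.
have Vcx : V (c :: x).
  by apply/splitV; left; exists x; split=> //; apply: ham_path_last hamc.
have [x1 [x2 def_x]] : exists x1 x2, x = x1 ++ d :: x2.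
  have /splitPr[x1 x2] : d \in x.
    by have := hasd _ Vcx; rewrite inE => /predU1P[/esym|].
  by exists x1, x2.
have Vdy : Vd (x1 ++ c :: x2).
  have Vswap : V (d :: x1 ++ c :: x2).
    apply: permV Vcx; rewrite def_x; apply/permP=> p.
    by rewrite /= !count_cat /=; lia.
  case/splitV: Vswap => -[u [eq_u Vu]]; case: eq_u; last by move=> ->.
  by move=> /esym/necd.
have [q2 hamd] := hamVd _ Vdy.
exists (map (cons c) q1 ++ (d :: x1 ++ c :: x2) :: map (cons d) q2).
apply: ham_path_ext (fun u => iff_sym (splitV u)) _.
apply: ham_path_cat (ham_path_cons c hamc) (ham_path_cons d hamd) _ _.
- by move=> u [u1 [-> _]] [u2 [[]]].
- by rewrite last_map -/x def_x; apply: swap_adj_front.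
Qed.

Lemma in_words_mem a b u : in_words (a, b) u ->
  (0 < a -> 1 \in u) /\ (0 < b -> 2 \in u).
Proof. by case=> _ [/= c1 c2]; rewrite -!has_pred1 !has_count c1 c2. Qed.

Lemma words_ham_path n a b w : a + b = n -> in_words (a, b) w ->
  exists q, ham_path swap_adj (in_words (a, b)) w q.
Proof.
elim: n a b w => [|n IHn] a b w sum_ab Ww.
  by exists [::]; apply: ham_path_constant Ww; lia.
have [ab0|[a_gt0 b_gt0]] : (a = 0 \/ b = 0) \/ (0 < a /\ 0 < b) by lia.
  by exists [::]; apply: ham_path_constant Ww.
have split_ab := in_words_first _ a_gt0 b_gt0.
have perm_ab u v : perm_eq u v -> in_words (a, b) u -> in_words (a, b) v.
  exact: in_words_perm.
case/split_ab: (Ww) => -[w' [-> Ww']].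
- have [q1 ham1] := IHn _ _ _ (ltac:(lia) : a.-1 + b = n) Ww'.
  apply: (ham_path_extend (c := 1) (d := 2) _ split_ab perm_ab _ _ ham1) => //.
  + by move=> u /in_words_mem [_ /(_ b_gt0)].
  + by move=> y; apply: IHn; lia.
- have [q1 ham1] := IHn _ _ _ (ltac:(lia) : a + b.-1 = n) Ww'.
  have split_ba u := iff_trans (split_ab u) (or_comm _ _).
  apply: (ham_path_extend (c := 2) (d := 1) _ split_ba perm_ab _ _ ham1) => //.
  + by move=> u /in_words_mem [/(_ a_gt0) ? _].
  + by move=> y; apply: IHn; lia.
Qed.

Lemma ham_path_hamiltonian P w q :
  ham_path swap_adj (in_words P) w q -> hamiltonian_path_from P w (w :: q).
Proof.
case=> uq memP pq; have inP u : u \in w :: q -> in_words P u by move/memP.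
do 5!split=> //; first by move=> u /memP.
move=> k lt_k; have lt_k' : k < size (w :: q) by apply: ltnW.
split; [exact/inP/mem_nth | split; first exact/inP/mem_nth].
by rewrite !(set_nth_default w) //; apply: epath_nth.
Qed.

Theorem theorem2 (P : nat * nat) (w : seq nat) :
  in_words P w -> exists p : seq (seq nat), hamiltonian_path_from P w p.
Proof.
case: P => a b Ww.
have [q ham] := words_ham_path (erefl (a + b)) Ww.
by exists (w :: q); apply: ham_path_hamiltonian.
Qed.
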